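(* $\mathfrak{r}_{\mathrm{simult}} \le \max\{\mathfrak{r}_\sigma,\mathfrak{d}\}$.
   Context: For $x\subseteq\omega$ and $y\in[\omega]^\omega$, $y$ reaps $x$ if $y\subseteq^* x$ or $y\subseteq^*\omega\setminus x$ (where $A\subseteq^* B$ means $A\setminus B$ is finite). $\mathfrak{r}_\sigma$ is the least size of $\mathcal{A}\subseteq[\omega]^\omega$ such that for every sequence $\langle x_n:n\in\omega\rangle$ of subsets of $\omega$ there is $y\in\mathcal{A}$ reaping every $x_n$. $\mathfrak{d}$ is the dominating number. $\mathfrak{r}_{\mathrm{simult}}$ is the least size of a family $\mathcal{F}\subseteq([\omega]^\omega)^\omega$ such that for every sequence $\langle A_n\in[\omega]^\omega:n\in\omega\rangle$ there is $\langle B_n:n\in\omega\rangle\in\mathcal{F}$ such that either $B_0\subseteq\omega\setminus A_n$ for some $n$, or $B_n\subseteq A_n$ for all $n$. *)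

From mathcomp Require Import all_boot.
From mathcomp Require Import boolp classical_sets cardinality.
Set Implicit Arguments. Unset Strict Implicit. Unset Printing Implicit Defensive.
Local Open Scope classical_set_scope.

(* Subsets of omega are [set nat]; [omega]^omega = infinite subsets. *)

Definition almost_subset (A B : set nat) : Prop := finite_set (A `\` B).

(* y reaps x (y is assumed infinite, as y ∈ [omega]^omega) *)
Definition reaps (y x : set nat) : Prop :=
  almost_subset y x \/ almost_subset y (~` x).

Definition r_sigma_family (A : set (set nat)) : Prop :=
  (forall y, A y -> infinite_set y) /\
  (forall x : nat -> set nat, exists2 y, A y & forall n, reaps y (x n)).

Definition le_star (f g : nat -> nat) : Prop :=
  exists m, forall n, (m <= n)%N -> (f n <= g n)%N.

Definition dominating_family (D : set (nat -> nat)) : Prop :=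
  forall f : nat -> nat, exists2 g, D g & le_star f g.

Definition r_simult_family (F : set (nat -> set nat)) : Prop :=
  (forall B, F B -> forall n, infinite_set (B n)) /\
  (forall A : nat -> set nat, (forall n, infinite_set (A n)) ->
     exists2 B, F B &
       ((exists n, B 0%N `<=` ~` A n) \/ (forall n, B n `<=` A n))).

(* Given an r_sigma witness A and a dominating family D, the family F of
   sequences  n |-> y \ [0, h n)  with y in A and h a finite modification of
   a member of D is an r_simult witness: for a sequence (A_n) take y in A
   reaping every A_n; if y is almost disjoint from some A_n a single cut-off
   at stage 0 works, otherwise the bounds of the finite sets y \ A_n are
   dominated by a member of D, patched on an initial segment.

   F is an image of A * (D * seq nat), so it remains to bound this product by
   A or by D.  This needs two facts of cardinal arithmetic without
   cardinals, both proved with Zorn's lemma: any two sets are comparable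
   (a maximal partial injection is total on one side), and an infinite set
   absorbs its square (Hessenberg; a maximal injective binary operation on a
   subset S of X leaves X \ S no larger than S).  Finally A and D are
   infinite, so they absorb the countable factor seq nat. *)

From mathcomp Require Import all_boot.
From mathcomp Require Import boolp classical_sets cardinality functions.
Set Implicit Arguments. Unset Strict Implicit. Unset Printing Implicit Defensive.
Local Open Scope classical_set_scope.
Local Open Scope card_scope.

Lemma card_le_fun T U (A : set T) (B : set U) (f : T -> U) :
  set_fun A B f -> set_inj A f -> A #<= B.
Proof.
move=> fAB finj; have [g] : $|{injfun A >-> B}| by apply/injfunPex; exists f.
exact: inj_card_le.
Qed.

Lemma card_le_funP T (U : pointedType) (A : set T) (B : set U) :
  A #<= B -> exists2 f : T -> U, set_fun A B f & set_inj A f.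
Proof. by move=> /pcard_leP/injfunPex. Qed.

Lemma card_leX T T' (U U' : pointedType)
    (A : set T) (A' : set T') (B : set U) (B' : set U') :
  A #<= B -> A' #<= B' -> A `*` A' #<= B `*` B'.
Proof.
move=> /card_le_funP[f fAB finj] /card_le_funP[g gAB ginj].
apply: (@card_le_fun _ _ _ _ (fun p => (f p.1, g p.2))).
  by move=> [x x'] [/= Ax Ax']; split; [exact: fAB | exact: gAB].
move=> [x x'] [y y']; rewrite !inE => -[/= Ax Ax'] [/= Ay Ay'] [fxy gxy].
by rewrite (finj x y (mem_set Ax) (mem_set Ay) fxy)
  (ginj x' y' (mem_set Ax') (mem_set Ay') gxy).
Qed.

Lemma card_le_setU T (U : pointedType) (A B : set T) (C : set U) :
  A #<= C -> B #<= C -> A `|` B #<= C `*` [set: bool].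
Proof.
move=> /card_le_funP[f fAC finj] /card_le_funP[g gBC ginj].
pose h x := if pselect (A x) then (f x, false) else (g x, true).
apply: (@card_le_fun _ _ _ _ h).
  by move=> x ABx; rewrite /h; case: pselect => [Ax|nAx]; split => //=;
    [exact: fAC | apply: gBC; case: ABx].
move=> x y; rewrite !inE /h => ABx ABy.
case: pselect => Ax; case: pselect => Ay //= [hxy].
- exact: finj (mem_set Ax) (mem_set Ay) hxy.
- by apply: ginj hxy; apply: mem_set; [case: ABx | case: ABy].
Qed.

Lemma chain_common V (F : set (set V)) p q : total_on F subset ->
  (\bigcup_(M in F) M) p -> (\bigcup_(M in F) M) q ->
  exists2 M, F M & M p /\ M q.
Proof.
move=> Ftot [M FM Mp] [N FN Nq]; have [MN|NM] := Ftot M N FM FN.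
  by exists N => //; split => //; apply: MN.
by exists M => //; split => //; apply: NM.
Qed.

Lemma Zorn_above V (P : set (set V)) (b : set V) : P b ->
  (forall F, F `<=` P -> total_on F subset -> P (\bigcup_(M in F) M)) ->
  exists M, [/\ b `<=` M, P M & forall N, M `<` N -> ~ P N].
Proof.
move=> Pb Pchain.
have [M [PbM Mmax]] : exists M, P (b `|` M) /\ forall N, M `<` N -> ~ P (b `|` N).
  apply: Zorn_bigcup => F FP Ftot.
  have [[M0 FM0]|F0] := pselect (F !=set0); last first.
    suff -> : \bigcup_(M in F) M = set0 by rewrite setU0.
    by apply/seteqP; split => // x [M FM _]; apply: F0; exists M.
  suff -> : b `|` \bigcup_(M in F) M = \bigcup_(N in setU b @` F) N.
    apply: Pchain; first by move=> _ [M FM <-]; exact: FP.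
    move=> _ _ [M FM <-] [N FN <-].
    by case: (Ftot M N FM FN) => [MN|NM]; [left|right]; apply: setUS.
  apply/seteqP; split => x.
    case=> [bx|[M FM Mx]]; first by exists (b `|` M0); [exists M0 | left].
    by exists (b `|` M); [exists M | right].
  by move=> [_ [M FM <-] [bx|Mx]]; [left|right; exists M].
exists (b `|` M); split => //.
move=> N [bMN NbM] PN; have bN : b `<=` N by apply: subset_trans bMN; exact: subsetUl.
apply: (Mmax N); last by rewrite (setUidr bN).
split; first by apply: subset_trans bMN; exact: subsetUr.
by move=> NM; apply: NbM => x /NM; right.
Qed.

Section PartialInjections.
Variables (T : Type) (U : pointedType).
Implicit Types (G : set (T * U)) (A : set T) (B : set U).

Definition partial_inj G :=
  (forall x y y', G (x, y) -> G (x, y') -> y = y') /\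
  (forall x x' y, G (x, y) -> G (x', y) -> x = x').

Lemma partial_inj_bigcup (F : set (set (T * U))) :
  F `<=` partial_inj -> total_on F subset -> partial_inj (\bigcup_(G in F) G).
Proof.
move=> Fpi Ftot; split.
  move=> x y y' xy xy'; have [M FM [Mxy Mxy']] := chain_common Ftot xy xy'.
  by have [Mf _] := Fpi M FM; exact: Mf Mxy Mxy'.
move=> x x' y xy x'y; have [M FM [Mxy Mx'y]] := chain_common Ftot xy x'y.
by have [_ Mi] := Fpi M FM; exact: Mi Mxy Mx'y.
Qed.

Definition graph_fun G (x : T) : U :=
  if pselect (exists y, G (x, y)) is left h then projT1 (cid h) else point.

Lemma graph_funP G x : (exists y, G (x, y)) -> G (x, graph_fun G x).
Proof. by rewrite /graph_fun; case: pselect => // h _; case: (cid h). Qed.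

Lemma partial_inj_card_le G A B : partial_inj G ->
  (forall x, A x -> exists y, G (x, y)) ->
  (forall x y, A x -> G (x, y) -> B y) -> A #<= B.
Proof.
move=> [_ Ginj] Gdom GB.
have GA x : A x -> G (x, graph_fun G x) by move=> /Gdom; exact: graph_funP.
apply: (@card_le_fun _ _ _ _ (graph_fun G)) => [x Ax|x y]; first exact: GB (GA x Ax).
rewrite !inE => Ax Ay fxy; apply: (Ginj _ _ (graph_fun G x) (GA x Ax)).
by rewrite fxy; exact: GA.
Qed.

End PartialInjections.

(* Any two sets are comparable in cardinality: a maximal partial injection
   between them is total on one side. *)
Lemma card_le_total (T U : pointedType) (A : set T) (B : set U) :
  A #<= B \/ B #<= A.
Proof.
pose P (G : set (T * U)) := G `<=` A `*` B /\ partial_inj G.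
have [G [[GAB Gpi] Gmax]] : exists G, P G /\ forall G', G `<` G' -> ~ P G'.
  apply: Zorn_bigcup => F FP Ftot; split.
    by move=> p [M /FP[MAB _] Mp]; exact: MAB.
  by apply: partial_inj_bigcup => // M /FP[].
have [Gdom|] := pselect (forall x, A x -> exists y, G (x, y)).
  by left; apply: (@partial_inj_card_le _ _ G) => // x y _ /GAB[].
have [Gf Gi] := Gpi; move=> /existsNP[a /not_implyP[Aa Gna]].
have [Gran|] := pselect (forall y, B y -> exists x, G (x, y)).
  right; apply: (@partial_inj_card_le _ _ [set q | G (q.2, q.1)]) => //.
    by split=> [x y y' /= xy xy'|x x' y /= xy x'y]; [exact: Gi xy xy' | exact: Gf xy x'y].
  by move=> y x _ /GAB[].
move=> /existsNP[b /not_implyP[Bb Gnb]].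
exfalso; apply: (Gmax (G `|` [set (a, b)])).
  split; first exact: subsetUl.
  by move=> /(_ (a, b) (or_intror erefl)) Gab; apply: Gna; exists b.
split; first by move=> _ [/GAB //|->].
have Gab x y : [set (a, b)] (x, y) -> x = a /\ y = b by case.
split.
- move=> x y y' [xy|/Gab[-> ->]] [xy'|/Gab[ex ->]] //; first exact: Gf xy xy'.
  + by case: Gna; exists y; rewrite -ex.
  + by case: Gna; exists y'.
- move=> x x' y [xy|/Gab[-> ->]] [x'y|/Gab[-> ey]] //; first exact: Gi xy x'y.
  + by case: Gnb; exists x; rewrite -ey.
  + by case: Gnb; exists x'.
Qed.

Section SquareAbsorption.
Variables (T : pointedType) (X : set T).
Implicit Types (G : set ((T * T) * T)) (S : set T).

Definition graph_points G : set T :=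
  [set t | exists u v z, G ((u, v), z) /\ [\/ t = u, t = v | t = z]].

Lemma graph_pointsP G u v z : G ((u, v), z) ->
  [/\ graph_points G u, graph_points G v & graph_points G z].
Proof. by move=> Guvz; split; exists u, v, z; split => //; constructor. Qed.

Lemma graph_points_sub G G' : G `<=` G' -> graph_points G `<=` graph_points G'.
Proof. by move=> GG' t [u [v [z [/GG' Guvz ht]]]]; exists u, v, z. Qed.

(* [G] is the graph of an injective binary operation on its points,
   which lie in [X]; this is the Zorn-invariant towards [X * X #<= X]. *)
Definition square_graph G := [/\ partial_inj G, graph_points G `<=` X &
  forall u v, graph_points G u -> graph_points G v -> exists z, G ((u, v), z)].

Lemma square_graph_card_le G : square_graph G ->
  graph_points G `*` graph_points G #<= graph_points G.
Proof.
move=> [Gpi _ Gtot]; apply: (partial_inj_card_le Gpi).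
  by move=> [u v] [/= Su Sv]; exact: Gtot.
by move=> [u v] z _ /graph_pointsP[].
Qed.

Lemma square_graph_bigcup (F : set (set ((T * T) * T))) :
  F `<=` square_graph -> total_on F subset -> square_graph (\bigcup_(G in F) G).
Proof.
move=> FS Ftot; split.
- by apply: partial_inj_bigcup => // G /FS[].
- move=> t [u [v [z [[G FG Guvz] ht]]]]; have [_ GX _] := FS G FG.
  by apply: GX; exists u, v, z.
move=> u v [u1 [v1 [z1 [G1 hu]]]] [u2 [v2 [z2 [G2 hv]]]].
have [G FG [Gu Gv]] := chain_common Ftot G1 G2; have [_ _ Gtot] := FS G FG.
have [||z Guvz] := Gtot u v; [by exists u1, v1, z1 | by exists u2, v2, z2 |].
by exists z, G.
Qed.

Definition seed_graph (e : nat -> T) : set ((T * T) * T) :=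
  [set ((e i.1, e i.2), e (pickle i)) | i in [set: nat * nat]].

Lemma seed_square_graph e : injective e -> (forall k, X (e k)) ->
  square_graph (seed_graph e).
Proof.
move=> einj eX; have seedE t : graph_points (seed_graph e) t -> exists k, t = e k.
  move=> [u [v [z [[[i k] _ [<- <- <-]] []]]]] ->;
  by [exists i | exists k | exists (pickle (i, k))].
split.
- split.
    by move=> [u v] z z' [[i k] _ [<- <- <-]] [[i' k'] _ [/einj<- /einj<- <-]].
  move=> [u v] [u' v'] z [[i k] _ [<- <- <-]] [[i' k'] _ [<- <-]].
  by move=> /einj/(pcan_inj pickleK)[-> ->].
- by move=> t /seedE[k ->].
move=> _ _ /seedE[i ->] /seedE[k ->]; exists (e (pickle (i, k))).
by exists (i, k).
Qed.

Lemma seed_graph_points e k : graph_points (seed_graph e) (e k).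
Proof.
by have [] := @graph_pointsP (seed_graph e) _ _ _ (ex_intro2 _ _ (k, k) I erefl).
Qed.

(* Extension step: if the points [S] of a square graph [G] inject into
   [X `\` S] via [j], then [G] extends to a square graph on [S `|` j @` S].
   The new pairs are those with a coordinate in [j @` S]; they are coded by
   [W] and sent injectively into [j @` S] through [kappa : W -> S]. *)
Section Extension.
Variables (G : set ((T * T) * T)) (j : T -> T) (kappa : (T * T) * (bool * bool) -> T).
Hypothesis Gsq : square_graph G.
Let S := graph_points G.
Let W := (S `*` S) `*` [set ab : bool * bool | ab.1 || ab.2].
Hypotheses (jS : set_fun S (X `\` S) j) (jinj : set_inj S j).
Hypotheses (kappaS : set_fun W S kappa) (kappa_inj : set_inj W kappa).

Let jif (b : bool) t := if b then j t else t.

Let new_pair (w : (T * T) * (bool * bool)) := (jif w.2.1 w.1.1, jif w.2.2 w.1.2).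

Definition extension := G `|` [set (new_pair w, j (kappa w)) | w in W].

Let jif_inj b b' t t' : S t -> S t' -> jif b t = jif b' t' -> b = b' /\ t = t'.
Proof.
move=> St St'; case: b b' => [] [] //= e.
- by rewrite (jinj (mem_set St) (mem_set St') e).
- by have [_] := jS St; rewrite e.
- by have [_] := jS St'; rewrite -e.
Qed.

Let new_pair_inj : set_inj W new_pair.
Proof.
move=> [[u v] [a b]] [[u' v'] [a' b']].
rewrite !inE => -[[/= Su Sv] _] [[/= Su' Sv'] _] [/= /jif_inj-/(_ Su Su')[-> ->]].
by move=> /jif_inj-/(_ Sv Sv')[-> ->].
Qed.

Let old_pair p z : G (p, z) -> [/\ S p.1, S p.2 & S z].
Proof. by case: p => u v /graph_pointsP. Qed.

Let new_pair_new w : W w -> ~ (S (new_pair w).1 /\ S (new_pair w).2).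
Proof.
move: w => [[u v] [[] []]] [[/= Su Sv] //] _ [/= Sju Sjv].
- by have [] := jS Su.
- by have [] := jS Su.
- by have [] := jS Sv.
Qed.

Let points_extension : graph_points extension `<=` S `|` j @` S.
Proof.
move=> t [u [v [z [[Guvz|[w Ww ew]] ht]]]].
  by left; have [] := graph_pointsP Guvz; case: ht => ->.
have jifS c s : S s -> (S `|` j @` S) (jif c s).
  by case: c => Ss; [right; exists s | left].
move: w Ww ew ht => [[u0 v0] [a b]] Ww; have [[/= Su0 Sv0] _] := Ww.
rewrite /new_pair /= => -[<- <- <-] [] ->; [exact: jifS | exact: jifS |].
by right; exists (kappa ((u0, v0), (a, b))); first exact: kappaS.
Qed.

Lemma extension_square_graph : square_graph extension.
Proof.
have [[Gf Gi] GX Gtot] := Gsq.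
split; first split.
- move=> p z z' [Gpz|[w Ww [ep <-]]] [Gpz'|[w' Ww' [ep' <-]]].
  + exact: Gf Gpz Gpz'.
  + by case: (new_pair_new Ww'); rewrite ep'; have [] := old_pair Gpz.
  + by case: (new_pair_new Ww); rewrite ep; have [] := old_pair Gpz'.
  + by rewrite (new_pair_inj (mem_set Ww) (mem_set Ww')) // ep ep'.
- move=> p p' z [Gpz|[w Ww [<- ez]]] [Gp'z|[w' Ww' [<- ez']]].
  + exact: Gi Gpz Gp'z.
  + by have [_ _] := old_pair Gpz; rewrite -ez'; have [] := jS (kappaS Ww').
  + by have [_ _] := old_pair Gp'z; rewrite -ez; have [] := jS (kappaS Ww).
  + have kw : kappa w = kappa w'.
      by apply: jinj; rewrite ?inE ?ez ?ez'; [exact: kappaS | exact: kappaS |].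
    by rewrite (kappa_inj (mem_set Ww) (mem_set Ww') kw).
- move=> t /points_extension[St|[s Ss <-]]; first exact: GX.
  by have [] := jS Ss.
move=> u v /points_extension Su /points_extension Sv.
have decomp t : (S `|` j @` S) t -> exists2 ts : bool * T, S ts.2 & t = jif ts.1 ts.2.
  by case=> [St|[s Ss <-]]; [exists (false, t) | exists (true, s)].
have [[a u0] /= Su0 ->] := decomp u Su; have [[b v0] /= Sv0 ->] := decomp v Sv.
have [ab|] := boolP (a || b).
  exists (j (kappa ((u0, v0), (a, b)))); right.
  by exists ((u0, v0), (a, b)).
rewrite negb_or => /andP[/negbTE-> /negbTE->].
by have [z Gz] := Gtot u0 v0 Su0 Sv0; exists z; left.
Qed.

Lemma extension_proper s : S s -> G `<` extension.
Proof.
move=> Ss; split; first exact: subsetUl.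
have Ww : W ((s, s), (true, true)) by split.
move=> /(_ _ (or_intror (ex_intro2 _ _ _ Ww erefl))) /graph_pointsP[Sjs _ _].
by have [] := jS Ss.
Qed.

End Extension.

End SquareAbsorption.

(* Zorn gives a maximal
   square graph [M] above a seed; its points [S] cannot inject into [X `\` S]
   by maximality, so [X `\` S] injects into [S] and [X] into [S * S]. *)
Theorem card_setX_infinite (T : pointedType) (X : set T) :
  infinite_set X -> X `*` X #<= X.
Proof.
move=> /infiniteP/card_le_funP[e eX einj].
have {}einj : injective e by move=> i k; apply: einj; rewrite inE.
have {}eX k : X (e k) by exact: eX.
have [M [seedM Msq Mmax]] :=
  Zorn_above (seed_square_graph einj eX) (@square_graph_bigcup _ X).
set S := graph_points M.
have SX : S `<=` X by case: Msq.
have SS : S `*` S #<= S := square_graph_card_le Msq.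
have countS (C : countType) : [set: C] #<= S.
  apply: (@card_le_fun _ _ _ _ (e \o pickle)) => [c _|c c' _ _].
    exact: graph_points_sub seedM _ (seed_graph_points e (pickle c)).
  by move=> /einj/(pcan_inj pickleK).
have [/card_le_funP[j jS jinj]|XSS] := card_le_total S (X `\` S).
  have /card_le_funP[kappa kappaS kappa_inj] :
      (S `*` S) `*` [set ab : bool * bool | ab.1 || ab.2] #<= S.
    apply: card_le_trans (card_le_trans (card_leX SS (countS _)) SS).
    by apply: subset_card_le => -[p ab] [Sp _].
  have eS : S (e 0) by exact: graph_points_sub seedM _ (seed_graph_points e 0).
  case: (Mmax _ (extension_proper kappa jS eS)).
  exact: extension_square_graph Msq jS jinj kappaS kappa_inj.
have XS : X #<= S.
  have XSU : X `<=` S `|` (X `\` S).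
    by move=> x Xx; have [Sx|nSx] := pselect (S x); [left|right].
  apply: card_le_trans (subset_card_le XSU) _.
  apply: card_le_trans (card_le_setU (card_lexx S) XSS) _.
  exact: card_le_trans (card_leX (card_lexx S) (countS _)) SS.
by apply: card_le_trans (card_leX XS XS) _; apply: card_le_trans SS (subset_card_le SX).
Qed.

Lemma card_leX_infinite (T : pointedType) (X : set T) U V (A : set U) (B : set V) :
  infinite_set X -> A #<= X -> B #<= X -> A `*` B #<= X.
Proof.
by move=> Xinf AX BX; exact: card_le_trans (card_leX AX BX) (card_setX_infinite Xinf).
Qed.

Lemma countable_le_infinite (C : countType) T (X : set T) :
  infinite_set X -> [set: C] #<= X.
Proof.
move=> /infiniteP; apply: card_le_trans.
by apply: (@card_le_fun _ _ _ _ pickle) => // c c' _ _ /(pcan_inj pickleK).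
Qed.

Lemma infinite_of_injective T (Z : set T) (f : nat -> T) :
  injective f -> (forall k, Z (f k)) -> infinite_set Z.
Proof.
move=> finj fZ; apply/infiniteP.
by apply: (@card_le_fun _ _ _ _ f) => // k k' _ _ /finj.
Qed.

Lemma finite_enum (T : pointedType) (A : set T) :
  finite_set A -> exists n (h : nat -> T), A `<=` h @` `I_n.
Proof.
move=> [n /card_esym/pcard_eqP/bijPex[h [_ _ hsurj]]].
by exists n, h.
Qed.

Lemma finite_bounded (Z : set nat) : finite_set Z -> exists k, Z `<=` `I_k.
Proof.
move=> /finite_enum[n [h Zh]]; exists (\max_(i < n) h i).+1 => z /Zh[i iI <-] /=.
by rewrite ltnS (leq_bigmax (F := fun i : 'I_n => h i) (Ordinal iI)).
Qed.

Lemma infinite_setD_II (y : set nat) c :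
  infinite_set y -> infinite_set (y `\` `I_c).
Proof.
move=> yinf yfin; apply: yinf.
apply: (@sub_finite_set _ _ ((y `\` `I_c) `|` `I_c)).
  by move=> z yz; have [zc|zc] := pselect (`I_c z); [right|left].
by rewrite finite_setU; split => //; exact: finite_II.
Qed.

Definition splits (y x : set nat) := infinite_set (y `&` x) /\ infinite_set (y `\` x).

Lemma splits_not_reaps y x : splits y x -> ~ reaps y x.
Proof. by move=> [yIx yDx] [|]; rewrite /almost_subset ?setDE ?setCK. Qed.

(* Every infinite set of naturals is split, e.g. by the image of the even
   numbers under an enumeration. *)
Lemma split_infinite (y : set nat) : infinite_set y -> exists x, splits y x.
Proof.
move=> /infiniteP/card_le_funP[e ey einj].
have {}einj : injective e by move=> i k; apply: einj; rewrite inE.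
exists (e @` [set k | ~~ odd k]); split.
  apply: (@infinite_of_injective _ _ (fun k => e k.*2)) => [i k /einj/double_inj //|k].
  by split; [exact: ey | exists k.*2; rewrite /= ?odd_double].
apply: (@infinite_of_injective _ _ (fun k => e k.*2.+1)) => [i k /einj[]/double_inj //|k].
split; first exact: ey.
by move=> [i ieven /einj ei]; move: ieven; rewrite ei /= odd_double.
Qed.

(* A witness for r_sigma is infinite: a finite family is defeated by
   splitting each of its (infinite) members. *)
Lemma r_sigma_family_infinite (A : set (set nat)) : r_sigma_family A -> infinite_set A.
Proof.
move=> [Ainf Areap] /finite_enum[n [h Ah]].
have split_h i : exists x, infinite_set (h i) -> splits (h i) x.
  have [/split_infinite[x ?]|hfin] := pselect (infinite_set (h i)); first by exists x.
  by exists set0 => /hfin.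
have [x xsplits] := choice split_h.
have [y Ay yreaps] := Areap x; have [i _ hiy] := Ah y Ay.
have := yreaps i; rewrite -hiy; apply: splits_not_reaps; apply: xsplits.
by rewrite hiy; exact: Ainf.
Qed.

(* A dominating family is infinite: a finite one is bounded by the
   successor of the pointwise maximum of its members. *)
Lemma dominating_family_infinite (D : set (nat -> nat)) :
  dominating_family D -> infinite_set D.
Proof.
move=> Ddom /finite_enum[n [h Dh]].
have [g Dg [m gf]] := Ddom (fun k => (\max_(i < n) h i k).+1).
have [i iI hig] := Dh g Dg; have := gf m (leqnn m).
by rewrite -hig ltnNge (leq_bigmax (F := fun i : 'I_n => h i m) (Ordinal iI)).
Qed.

Definition patch (s : seq nat) (g : nat -> nat) (n : nat) : nat :=
  if (n < size s)%N then nth 0%N s n else g n.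

Lemma patch_ge (f g : nat -> nat) m :
  (forall n, (m <= n)%N -> (f n <= g n)%N) -> forall n, (f n <= patch (mkseq f m) g n)%N.
Proof.
move=> fg n; rewrite /patch size_mkseq; case: ltnP => [nm|/fg //].
by rewrite nth_mkseq.
Qed.

Definition tails (y : set nat) (h : nat -> nat) (n : nat) : set nat := y `\` `I_(h n).

Definition tail_family (A : set (set nat)) (D : set (nat -> nat)) :
  set (nat -> set nat) :=
  [set tails t.1 (patch t.2.2 t.2.1) | t in A `*` (D `*` [set: seq nat])].

(* Given [A_n], take [y] in [A] reaping all of them.  If [y] is almost
   disjoint from some [A_n], one cut-off at stage 0 suffices; otherwise
   [y `\` A_n] is bounded by some [f n], and a member of [D] dominating [f],
   patched on an initial segment, cuts every [y `\` A_n] away. *)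
Lemma tail_family_r_simult A D : r_sigma_family A -> dominating_family D ->
  r_simult_family (tail_family A D).
Proof.
move=> [Ainf Areap] Ddom; split.
  by move=> _ [[y [g s]] [/= Ay _] <-] n; apply: infinite_setD_II; exact: Ainf.
move=> An _; have [y Ay yreaps] := Areap An.
have [[n yAn]|yA] := pselect (exists n, almost_subset y (~` An n)).
  have [k yk] := finite_bounded yAn; have [g Dg _] := Ddom id.
  exists (tails y (patch [:: k] g)); first by exists (y, (g, [:: k])).
  by left; exists n => z [yz zk] Anz; apply/zk/yk; split => // /(_ Anz).
have {}yA n : almost_subset y (An n).
  by case: (yreaps n) => // yAn; case: yA; exists n.
have [f fP] := choice (fun n => finite_bounded (yA n)).
have [g Dg [m fg]] := Ddom f.
exists (tails y (patch (mkseq f m) g)); first by exists (y, (g, mkseq f m)).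
right => n z [yz zn]; apply: contrapT => nAnz; apply: zn.
exact: leq_trans (fP n z (conj yz nAnz)) (patch_ge fg n).
Qed.

Theorem mainTheorem6 :
  forall (A : set (set nat)) (D : set (nat -> nat)),
    r_sigma_family A -> dominating_family D ->
    exists F : set (nat -> set nat),
      r_simult_family F /\ (F #<= A \/ F #<= D).
Proof.
move=> A D HA HD; exists (tail_family A D); split; first exact: tail_family_r_simult.
have Fle : tail_family A D #<= A `*` (D `*` [set: seq nat]) by exact: card_image_le.
have Ainf := r_sigma_family_infinite HA; have Dinf := dominating_family_infinite HD.
have [AD|DA] := card_le_total A D; [right|left]; apply: card_le_trans Fle _.
  apply: (card_leX_infinite Dinf AD).
  exact: card_leX_infinite Dinf (card_lexx D) (countable_le_infinite _ Dinf).
apply: (card_leX_infinite Ainf (card_lexx A)).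
exact: card_leX_infinite Ainf DA (countable_le_infinite _ Ainf).
Qed.
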